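(* Let $(M,d)$ be a metric space in which any two points $A,B\in M$ are joined by a unique metric segment $[A,B]$. Then the following two conditions are equivalent. Condition (A): for any three distinct points $A,B,C\in M$ there exists a unique $O\in M$ such that $\{X,Y\}\subset\mathcal C_d(Z,O)$ for all distinct $X,Y,Z\in\{A,B,C\}$. Condition (B): for any three distinct points $A,B,C\in M$ there exists $O\in M$ such that $[A,B]\cap[B,C]\cap[A,C]=\{O\}$.
   Context: For a metric space $(M,d)$ and $A,B\in M$, the metric segment is $[A,B]=\{X\in M:\ d(A,X)+d(X,B)=d(A,B)<+\infty\}$. For $A,B\in M$, $\mathcal C_d(A,B)=\{X\in M:\ d(X,A)=d(X,B)+d(A,B)<+\infty\}$. *)

From mathcomp Require Import all_boot all_order all_algebra.
From mathcomp Require Import all_classical all_reals.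
Set Implicit Arguments. Unset Strict Implicit. Unset Printing Implicit Defensive.
Import Order.TTheory GRing.Theory Num.Theory.
Local Open Scope classical_set_scope.
Local Open Scope ring_scope.

Section Defs.
Variables (R : realType) (M : Type) (d : M -> M -> \bar R).

Definition is_emetric : Prop :=
  [/\ (forall x y, (0 <= d x y)%E),
      (forall x y, d x y = 0%E <-> x = y),
      (forall x y, d x y = d y x) &
      (forall x y z, (d x z <= d x y + d y z)%E)].

Definition segment (A B : M) : set M :=
  [set X | (d A X + d X B = d A B)%E /\ (d A B < +oo)%E].

Definition Cd (A B : M) : set M :=
  [set X | (d X A = d X B + d A B)%E /\ (d X A < +oo)%E].

Definition geodesic_image (A B : M) (S : set M) : Prop :=
  exists r : R, d A B = r%:E /\
    exists g : R -> M, [/\ g 0 = A, g r = B,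
      (forall s t, 0 <= s <= r -> 0 <= t <= r -> d (g s) (g t) = `|s - t|%:E) &
      S = [set g t | t in [set t | 0 <= t <= r]]].

Definition uniquely_joined : Prop :=
  forall A B : M, exists! S : set M, geodesic_image A B S.

Definition condA : Prop :=
  forall A B C : M, A <> B -> B <> C -> A <> C ->
    exists! O : M, forall X Y Z : M,
      (X = A \/ X = B \/ X = C) -> (Y = A \/ Y = B \/ Y = C) ->
      (Z = A \/ Z = B \/ Z = C) -> X <> Y -> Y <> Z -> X <> Z ->
      Cd Z O X /\ Cd Z O Y.

Definition condB : Prop :=
  forall A B C : M, A <> B -> B <> C -> A <> C ->
    exists O : M, segment A B `&` segment B C `&` segment A C = [set O].

End Defs.

(** Only the symmetry of [d] matters: [O] lies on the segment [[Z,X]] exactly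
    when [X] lies in [C_d(Z,O)], so the points [O] allowed by condition (A)
    are precisely the points of the triple intersection of condition (B), and
    "there is a unique such [O]" is "the intersection is a singleton". *)
From mathcomp Require Import all_boot all_order all_algebra.
From mathcomp Require Import all_classical all_reals.
Import Order.TTheory GRing.Theory Num.Theory.
Local Open Scope classical_set_scope.
Local Open Scope ring_scope.

Lemma exists_unique_set1 (T : Type) (P : T -> Prop) (S : set T) :
  (forall x, P x <-> S x) -> (exists! x, P x) <-> exists x, S = [set x].
Proof.
move=> PS; split.
  move=> [x [Px Px_uniq]]; exists x; apply/seteqP; split=> [y /PS Py|y ->].
    by rewrite /= (Px_uniq y Py).
  exact/PS.
move=> [x Sx]; exists x; split=> [|y /PS]; first by apply/PS; rewrite Sx.
by rewrite Sx.
Qed.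

Section SymmetricDistance.
Variables (R : realType) (M : Type) (d : M -> M -> \bar R).
Hypothesis dC : forall x y, d x y = d y x.

Lemma segmentC (U V : M) : segment d U V = segment d V U.
Proof.
have sub W Z : segment d W Z `<=` segment d Z W.
  move=> X [sumWZ finWZ]; split; last by rewrite dC.
  by rewrite addeC (dC X W) (dC Z X) (dC Z W).
by apply/seteqP; split; apply: sub.
Qed.

Lemma segment_Cd (Z X O : M) : segment d Z X O <-> Cd d Z O X.
Proof.
rewrite /segment /Cd /= (dC X Z) (dC O X) addeC.
by split=> -[-> ?].
Qed.

Lemma segment3_pair (A B C O : M) :
  (segment d A B `&` segment d B C `&` segment d A C) O ->
  forall U V : M, (U = A \/ U = B \/ U = C) -> (V = A \/ V = B \/ V = C) ->
    U <> V -> segment d U V O.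
Proof.
move=> [[OAB OBC] OAC] U V.
case=> [->|[->|->]] [->|[->|->]] neUV; try by case: neUV.
all: by [|rewrite segmentC].
Qed.

Lemma Cd_center_segment3 (A B C O : M) : A <> B -> B <> C -> A <> C ->
  (forall X Y Z : M,
      (X = A \/ X = B \/ X = C) -> (Y = A \/ Y = B \/ Y = C) ->
      (Z = A \/ Z = B \/ Z = C) -> X <> Y -> Y <> Z -> X <> Z ->
      Cd d Z O X /\ Cd d Z O Y) <->
  (segment d A B `&` segment d B C `&` segment d A C) O.
Proof.
move=> neAB neBC neAC; split=> [center|OABC].
  have inA : A = A \/ A = B \/ A = C by left.
  have inB : B = A \/ B = B \/ B = C by right; left.
  have inC : C = A \/ C = B \/ C = C by right; right.
  have [/segment_Cd OAB _] := center B C A inB inC inA neBC (nesym neAC) (nesym neAB).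
  have [/segment_Cd OBC _] := center C A B inC inA inB (nesym neAC) neAB (nesym neBC).
  have [/segment_Cd OAC _] := center C B A inC inB inA (nesym neBC) (nesym neAB) (nesym neAC).
  by split; [split|].
move=> X Y Z inX inY inZ neXY neYZ neXZ.
by split; apply/segment_Cd; apply: segment3_pair OABC _ _ _ _ _ => //; apply: nesym.
Qed.

End SymmetricDistance.

Theorem lemma2p1 (R : realType) (M : Type) (d : M -> M -> \bar R) :
  is_emetric d -> uniquely_joined d -> (condA d <-> condB d).
Proof.
move=> [_ _ dC _] _.
have centerE A B C (neAB : A <> B) (neBC : B <> C) (neAC : A <> C) :=
  @exists_unique_set1 _ _ _ (fun O => @Cd_center_segment3 R M d dC A B C O neAB neBC neAC).
split=> cond A B C neAB neBC neAC.
  by apply/(centerE A B C neAB neBC neAC)/cond.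
by apply/(centerE A B C neAB neBC neAC)/cond.
Qed.
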